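(* Let $N\ge2$ and let $W\in C^2((-\infty,1])$ satisfy $W(0)=0$, $W\ge0$, $W''\ge0$ on $(-\infty,1]\setminus\{0\}$. For $\varepsilon>0$ let $f_\varepsilon:[0,1]\to[0,1]$ be the radial profile and $f_\varepsilon^{-1}:[0,1]\to[0,1]$ its inverse. Then: (i) for $0<\tilde\varepsilon\le\varepsilon$, $f_\varepsilon(\varepsilon r)\ge f_{\tilde\varepsilon}(\tilde\varepsilon r)$ for $0<r<1/\varepsilon$; (ii) if $W'(1)>0$ and $t_0:=\sup\{0\le t<1: W(t)=0\}$, then $t_0<1$, $\lim_{\varepsilon\to0}\frac{f_\varepsilon^{-1}(\sqrt{1-t_0})}{\varepsilon}=\infty$, and for every $\delta\in(0,1-t_0)$, $\lim_{\varepsilon\to0}\frac{f_\varepsilon^{-1}(\sqrt{1-t_0-\delta})}{\varepsilon}\in(0,\infty)$. In particular, for every $a>0$ there is $\varepsilon_a>0$ such that $f_\varepsilon^2\le1-t_0$ on $[0,a\varepsilon]$ for all $\varepsilon\in(0,\varepsilon_a]$, and for every $\delta\in(0,1-t_0)$ there is $C_\delta>0$ such that $1-t_0-\delta\le f_\varepsilon^2$ on $[C_\delta\varepsilon,1]$ for all $\varepsilon\in(0,1/C_\delta]$.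
   Context: $f_\varepsilon$ is the unique solution of $f''+\frac{N-1}rf'-\frac{N-1}{r^2}f=-\frac1{\varepsilon^2}W'(1-f^2)f$ in $(0,1)$, $f(1)=1$, with $r^{\frac{N-1}2}f',r^{\frac{N-3}2}f\in L^2(0,1)$; it satisfies $f_\varepsilon(0)=0$ and is increasing from $[0,1]$ onto $[0,1]$. *)

From Stdlib Require Import Reals Lra.
From Coquelicot Require Import Coquelicot.
Open Scope R_scope.

(* W is C^2 on (-oo,1], with first and second derivatives W1, W2.
   Derivatives are genuine at every x < 1; at the endpoint 1 we require
   left-continuity of W, W1, W2 (so W1 1 is the left derivative of W at 1,
   W2 1 that of W1, by the mean value theorem). *)
Definition C2_upto1 (W W1 W2 : R -> R) : Prop :=
  (forall x, x < 1 ->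
     is_derive W x (W1 x) /\ is_derive W1 x (W2 x) /\ continuous W2 x) /\
  filterlim W (at_left 1) (locally (W 1)) /\
  filterlim W1 (at_left 1) (locally (W1 1)) /\
  filterlim W2 (at_left 1) (locally (W2 1)).

Definition W_hyp (W W1 W2 : R -> R) : Prop :=
  C2_upto1 W W1 W2 /\ W 0 = 0 /\
  (forall x, x <= 1 -> 0 <= W x) /\
  (forall x, x <= 1 -> x <> 0 -> 0 <= W2 x).

(* f is the radial profile f_eps on [0,1] (with the properties stated in the
   context): classical solution of
     f'' + (N-1)/r f' - (N-1)/r^2 f = -(1/eps^2) W'(1-f^2) f  on (0,1),
   f(1) = 1, r^((N-1)/2) f' and r^((N-3)/2) f in L^2(0,1)
   (expressed as convergence of the improper integrals of the nonnegative
   continuous integrands r^(N-1) f'^2 and r^(N-1) f^2 / r^2 on (0,1)),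
   f(0) = 0, and f strictly increasing on [0,1]. *)
Definition radial_profile (N : nat) (W1 : R -> R) (eps : R) (f : R -> R) : Prop :=
  (forall r, 0 < r < 1 ->
     ex_derive f r /\ ex_derive (Derive f) r /\
     Derive (Derive f) r + (INR N - 1) / r * Derive f r
       - (INR N - 1) / r ^ 2 * f r
     = - (1 / eps ^ 2) * W1 (1 - f r ^ 2) * f r) /\
  f 1 = 1 /\
  ex_RInt_gen (fun r => r ^ (N - 1) * (Derive f r) ^ 2) (at_right 0) (at_left 1) /\
  ex_RInt_gen (fun r => r ^ (N - 1) / r ^ 2 * (f r) ^ 2) (at_right 0) (at_left 1) /\
  f 0 = 0 /\
  (forall x y, 0 <= x -> x < y -> y <= 1 -> f x < f y).

Definition inverse01 (f g : R -> R) : Prop :=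
  (forall x, 0 <= x <= 1 -> g (f x) = x) /\
  (forall y, 0 <= y <= 1 -> 0 <= g y <= 1 /\ f (g y) = y).

From Stdlib Require Import Reals Lra Lia Classical.
From Coquelicot Require Import Coquelicot.
Open Scope R_scope.

(* After the change of variables s = r / eps every profile solves the same equation
     u'' + K/s u' - K/s^2 u = - W'(1 - u^2) u,   K = N - 1,
   on (0, 1/eps) with u(1/eps) = 1, and W' is nondecreasing and nonnegative on [0, 1].
   (i) is a comparison principle for this equation: on a component of {v < u} the weighted
   Wronskian s^K (u'v - uv') is nondecreasing and nonnegative at the left end (it tends to 0
   at the origin, and u' >= v' at a contact point), so u/v cannot decrease there, which is
   incompatible with u <= v at the right end.
   (ii) W' vanishes on (0, t0], so while f^2 >= 1 - t0 the equation is linear and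
   u' + K u/s is constant; this forces f^-1(sqrt(1 - t0)) >= sqrt(1 - t0) eps / 8.
   Above t0 + delta we have W' >= m > 0, and the Riccati substitution z = u'/u + K/(2s)
   shows that u cannot stay below sqrt(1 - t0 - delta) on [A, 2A] once A^2 m is large;
   hence f^-1(sqrt(1 - t0 - delta)) < 2 A eps, and by (i) this quotient is monotone in eps. *)

(** * Calculus on the real line *)

Lemma is_derive_eq (f : R -> R) (x a b : R) : is_derive f x a -> a = b -> is_derive f x b.
Proof. now intros H <-. Qed.

Lemma is_derive_Rplus (f g : R -> R) x a b :
  is_derive f x a -> is_derive g x b -> is_derive (fun t => f t + g t) x (a + b).
Proof. intros; now apply (is_derive_plus f g). Qed.

Lemma is_derive_Rminus (f g : R -> R) x a b :
  is_derive f x a -> is_derive g x b -> is_derive (fun t => f t - g t) x (a - b).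
Proof. intros; now apply (is_derive_minus f g). Qed.

Lemma is_derive_Rpow k x : is_derive (fun t => t ^ k) x (INR k * x ^ pred k).
Proof.
  eapply is_derive_eq.
  - apply (is_derive_pow (fun t => t) k x 1), (is_derive_id (K := R_AbsRing)).
  - simpl; ring.
Qed.

Lemma is_derive_comp_scal (f : R -> R) c x l :
  is_derive f (c * x) l -> is_derive (fun t => f (c * t)) x (c * l).
Proof.
  intros H. eapply is_derive_eq.
  - apply (is_derive_comp f (fun t => c * t)); [exact H|].
    apply (is_derive_scal (fun t => t)), (is_derive_id (K := R_AbsRing)).
  - change (c * 1 * l = c * l); ring.
Qed.

Lemma is_derive_continuous (f : R -> R) x l : is_derive f x l -> continuous f x.
Proof. intros H; exact (ex_derive_continuous f x (ex_intro _ l H)). Qed.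

Lemma MVT_closed (g dg : R -> R) a b : a < b ->
  (forall x, a <= x <= b -> is_derive g x (dg x)) ->
  exists c, a <= c <= b /\ g b - g a = dg c * (b - a).
Proof.
  intros Hab H.
  destruct (MVT_gen g a b dg) as [c [Hc Heq]];
    rewrite ?Rmin_left, ?Rmax_right in * by lra.
  - intros x Hx; apply H; lra.
  - intros x Hx; apply continuity_pt_filterlim.
    apply (is_derive_continuous _ _ (dg x)), H; lra.
  - now exists c.
Qed.

Lemma nondecreasing_of_derive_nonneg (g dg : R -> R) a b : a <= b ->
  (forall x, a <= x <= b -> is_derive g x (dg x) /\ 0 <= dg x) -> g a <= g b.
Proof.
  intros Hab H. destruct (Req_dec a b) as [->|Hne]; [lra|].
  destruct (MVT_closed g dg a b) as [c [Hc E]]; [lra | now intros; apply H|].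
  destruct (H c Hc). nra.
Qed.

Lemma derive_nonneg_of_right_le (g : R -> R) x l d : 0 < d ->
  (forall h, 0 < h < d -> g x <= g (x + h)) -> is_derive g x l -> 0 <= l.
Proof.
  intros Hd Hle Hg. apply Rnot_lt_le; intros Hl.
  apply is_derive_Reals in Hg. destruct (Hg (- l / 2)) as [e He]; [lra|].
  assert (0 < Rmin d e) by (apply Rmin_glb_lt; [lra | apply cond_pos]).
  assert (Rmin d e <= d) by apply Rmin_l. assert (Rmin d e <= e) by apply Rmin_r.
  set (h := Rmin d e / 2).
  assert (Hh : 0 < h < e) by (unfold h; lra).
  specialize (He h ltac:(lra) ltac:(rewrite Rabs_right; lra)).
  specialize (Hle h ltac:(unfold h; lra)). apply Rabs_def2 in He.
  assert (0 <= (g (x + h) - g x) / h) by (apply Rdiv_le_0_compat; lra).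
  lra.
Qed.

Lemma ball_Rabs x e y : ball x e y -> Rabs (y - x) < e.
Proof. easy. Qed.

Lemma Rabs_ball x e y : Rabs (y - x) < e -> ball x e y.
Proof. easy. Qed.

Lemma continuous_pos_nbhd (g : R -> R) x : continuous g x -> 0 < g x ->
  exists d, 0 < d /\ forall y, Rabs (y - x) < d -> 0 < g y.
Proof.
  intros Hc Hpos.
  destruct (proj1 (filterlim_locally g (g x)) Hc (mkposreal _ Hpos)) as [d Hd].
  exists d; split; [apply cond_pos|]. intros y Hy.
  specialize (Hd y Hy). apply ball_Rabs, Rabs_def2 in Hd. simpl in Hd. lra.
Qed.

Lemma continuous_at_left (g : R -> R) x :
  continuous g x -> filterlim g (at_left x) (locally (g x)).
Proof. apply filterlim_filter_le_1, filter_le_within. Qed.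

Lemma continuous_at_right (g : R -> R) x :
  continuous g x -> filterlim g (at_right x) (locally (g x)).
Proof. apply filterlim_filter_le_1, filter_le_within. Qed.

Lemma filterlim_Rmult_l {T : Type} {F : (T -> Prop) -> Prop} {FF : Filter F}
  (g : T -> R) c l :
  filterlim g F (locally l) -> filterlim (fun x => c * g x) F (locally (c * l)).
Proof. intros H; eapply filterlim_comp; [exact H | exact (filterlim_scal_r c l)]. Qed.

Lemma at_left_between a b : a < b -> at_left b (fun x => a < x < b).
Proof.
  intros Hab. exists (mkposreal (b - a) ltac:(lra)). intros x Hx Hxb.
  apply ball_Rabs, Rabs_def2 in Hx. simpl in Hx. lra.
Qed.

Lemma at_right_between a b : a < b -> at_right a (fun x => a < x < b).
Proof.
  intros Hab. exists (mkposreal (b - a) ltac:(lra)). intros x Hx Hxa.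
  apply ball_Rabs, Rabs_def2 in Hx. simpl in Hx. lra.
Qed.

Lemma filterlim_scal_at_left c x : 0 < c ->
  filterlim (fun s => c * s) (at_left x) (at_left (c * x)).
Proof.
  intros Hc P [e He].
  exists (mkposreal (e / c) (Rdiv_lt_0_compat _ _ (cond_pos e) Hc)).
  intros y Hy Hyx. apply He; [|nra].
  apply Rabs_ball. apply ball_Rabs in Hy. simpl in Hy.
  replace (c * y - c * x) with (c * (y - x)) by ring.
  rewrite Rabs_mult, Rabs_right by lra.
  apply (Rmult_lt_compat_l c) in Hy; [|lra].
  now replace (c * (e / c)) with (pos e) in Hy by (field; lra).
Qed.

Lemma is_lub_exists_gt (E : R -> Prop) m x : is_lub E m -> x < m -> exists t, E t /\ x < t.
Proof.
  intros [_ Hleast] Hx. apply NNPP; intros Hn.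
  enough (m <= x) by lra. apply Hleast.
  intros t Et. apply Rnot_lt_le; intros Hl. apply Hn; eauto.
Qed.

Lemma nonincreasing_bounded_lim_at_right0 (phi : R -> R) e0 B : 0 < e0 ->
  (forall e1 e2, 0 < e1 -> e1 <= e2 -> e2 < e0 -> phi e2 <= phi e1) ->
  (forall e, 0 < e < e0 -> phi e <= B) ->
  exists L, filterlim phi (at_right 0) (locally L) /\ forall e, 0 < e < e0 -> phi e <= L.
Proof.
  intros He0 Hmono Hbound.
  set (E := fun x => exists e, 0 < e < e0 /\ x = phi e).
  destruct (completeness E) as [L HL].
  - exists B. intros x [e [He ->]]. now apply Hbound.
  - exists (phi (e0 / 2)), (e0 / 2). split; [lra | reflexivity].
  - assert (Hup : forall e, 0 < e < e0 -> phi e <= L)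
      by (intros e He; apply HL; now exists e).
    exists L; split; [|exact Hup].
    apply filterlim_locally. intros eta. assert (Heta := cond_pos eta).
    destruct (is_lub_exists_gt E L (L - eta) HL) as [x [[e1 [He1 ->]] Hx]]; [lra|].
    apply (filter_imp (fun e => 0 < e < e1)); [|now apply at_right_between].
    intros e He. apply Rabs_ball, Rabs_def1.
    + assert (phi e <= L) by (apply Hup; lra). lra.
    + assert (phi e1 <= phi e) by (apply Hmono; lra). lra.
Qed.

Lemma first_nonpositive_after (g : R -> R) s T : s < T -> 0 < g s -> g T <= 0 ->
  (forall x, s <= x < T -> continuous g x) ->
  exists b, s < b <= T /\ g b <= 0 /\ forall x, s <= x < b -> 0 < g x.
Proof.
  intros HsT Hgs HgT Hc.
  set (E := fun x => s <= x <= T /\ forall y, s <= y <= x -> 0 < g y).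
  destruct (completeness E) as [b Hb].
  - exists T. now intros x [Hx _].
  - exists s. split; [lra|]. intros y Hy. now replace y with s by lra.
  - assert (HsE : s <= b) by (apply Hb; split; [lra|]; intros y Hy; now replace y with s by lra).
    assert (HbT : b <= T) by (apply Hb; now intros x [Hx _]).
    assert (Hpos : forall x, s <= x < b -> 0 < g x).
    { intros x Hx. destruct (is_lub_exists_gt E b x Hb) as [x' [[_ Hx'] Hxx']]; [lra|].
      apply Hx'; lra. }
    assert (Hgb : g b <= 0).
    { destruct (Req_dec b T) as [->|HbT']; [exact HgT|].
      apply Rnot_lt_le; intros Hgb.
      destruct (continuous_pos_nbhd g b (Hc b ltac:(lra)) Hgb) as [d [Hd Hnear]].
      set (b' := Rmin (b + d / 2) T).
      assert (b' <= b + d / 2) by apply Rmin_l. assert (b' <= T) by apply Rmin_r.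
      assert (b < b') by (apply Rmin_glb_lt; lra).
      enough (b' <= b) by lra. apply Hb. split; [lra|].
      intros y Hy. destruct (Rlt_or_le y b); [apply Hpos; lra|].
      apply Hnear, Rabs_def1; lra. }
    exists b. repeat split; auto.
    destruct (Req_dec s b) as [<-|]; lra.
Qed.

Lemma last_nonpositive_before (g : R -> R) s : 0 < s -> 0 < g s ->
  (forall x, 0 < x <= s -> continuous g x) ->
  exists a, 0 <= a < s /\ (0 < a -> g a = 0) /\ forall x, a < x <= s -> 0 < g x.
Proof.
  intros Hs Hgs Hc.
  set (E := fun x => x = 0 \/ (0 < x <= s /\ g x <= 0)).
  destruct (completeness E) as [a Ha].
  - exists s. intros x [->|Hx]; lra.
  - exists 0. now left.
  - assert (Ha0 : 0 <= a) by (apply Ha; now left).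
    assert (Has : a <= s) by (apply Ha; intros x [->|Hx]; lra).
    assert (Hpos : forall x, a < x <= s -> 0 < g x).
    { intros x Hx. apply Rnot_le_lt; intros Hn.
      enough (x <= a) by lra. apply Ha. right; split; lra. }
    assert (Hga : 0 < a -> g a <= 0).
    { intros Ha0'. apply Rnot_lt_le; intros Hga.
      destruct (continuous_pos_nbhd g a (Hc a ltac:(lra)) Hga) as [d [Hd Hnear]].
      destruct (is_lub_exists_gt E a (Rmax (a - d) 0) Ha) as [y [Ey Hy]].
      { apply Rmax_lub_lt; lra. }
      assert (a - d <= Rmax (a - d) 0) by apply Rmax_l.
      assert (0 <= Rmax (a - d) 0) by apply Rmax_r.
      assert (y <= a) by (now apply Ha).
      destruct Ey as [->|[_ Ey]]; [lra|].
      assert (0 < g y) by (apply Hnear, Rabs_def1; lra). lra. }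
    assert (Has' : a < s) by (destruct (Req_dec a s) as [->|]; [specialize (Hga Hs)|]; lra).
    exists a. repeat split; auto.
    intros Ha0'. apply Rle_antisym; [now apply Hga|].
    apply (filterlim_le (F := at_right a) (fun _ => 0) g 0 (g a)).
    + apply (filter_imp (fun x => a < x < s)); [|now apply at_right_between].
      intros x Hx. left; apply Hpos; lra.
    + apply filterlim_const.
    + apply continuous_at_right, Hc; lra.
Qed.

(* Comparison with tan: atan (z / sqrt q) decreases at rate at least sqrt q but has range PI. *)
Lemma riccati_interval_bound (z dz : R -> R) q a b : 0 < q -> a < b ->
  (forall s, a <= s <= b -> is_derive z s (dz s) /\ dz s <= - (q + z s ^ 2)) ->
  sqrt q * (b - a) < PI.
Proof.
  intros Hq Hab Hz. set (r := sqrt q).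
  assert (Hr : 0 < r) by (apply sqrt_lt_R0; lra).
  assert (Hr2 : r * r = q) by (apply sqrt_sqrt; lra).
  set (U := fun s => atan (/ r * z s)).
  destruct (MVT_closed U (fun s => / r * dz s / (1 + (/ r * z s) ^ 2)) a b) as [c [Hc E]];
    [lra | |].
  { intros s Hs. eapply is_derive_eq.
    - apply (is_derive_comp atan (fun s => / r * z s)); [apply is_derive_atan|].
      apply is_derive_scal, Hz; lra.
    - change (/ r * dz s * / (1 + (/ r * z s)²) = / r * dz s / (1 + (/ r * z s) ^ 2)).
      now rewrite Rsqr_pow2. }
  assert (HU' : / r * dz c / (1 + (/ r * z c) ^ 2) <= - r).
  { destruct (Hz c Hc) as [_ Hdz].
    assert (0 < q + z c ^ 2) by nra.
    assert (0 <= - (dz c + (q + z c ^ 2)) / (q + z c ^ 2)) by (apply Rdiv_le_0_compat; lra).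
    replace (/ r * dz c / (1 + (/ r * z c) ^ 2))
      with (- r - r * (- (dz c + (q + z c ^ 2)) / (q + z c ^ 2)))
      by (rewrite <- Hr2; field; split; [nra | lra]).
    nra. }
  assert (Ha := atan_bound (/ r * z a)). assert (Hb := atan_bound (/ r * z b)).
  unfold U in E. nra.
Qed.

(** * The potential *)

Section Potential.

Variables W W1 W2 : R -> R.
Hypothesis HW : W_hyp W W1 W2.

Lemma W_derive x : x < 1 -> is_derive W x (W1 x).
Proof. destruct HW as [[H _] _]. intros; now apply H. Qed.

Lemma W1_derive x : x < 1 -> is_derive W1 x (W2 x).
Proof. destruct HW as [[H _] _]. intros; now apply H. Qed.

Lemma W_nonneg x : x <= 1 -> 0 <= W x.
Proof. destruct HW as [_ [_ [H _]]]. auto. Qed.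

Lemma W_at_0 : W 0 = 0.
Proof. now destruct HW as [_ [H _]]. Qed.

(* The hypothesis only gives W'' >= 0 away from 0; continuity of W'' closes the gap. *)
Lemma W2_nonneg x : x < 1 -> 0 <= W2 x.
Proof.
  destruct HW as [[Hd _] [_ [_ HW2]]]. intros Hx.
  destruct (Req_dec x 0) as [->|Hne]; [|apply HW2; lra].
  destruct (Hd 0 ltac:(lra)) as [_ [_ Hc]].
  apply (filterlim_le (F := at_right 0) (fun _ => 0) W2 0 (W2 0)).
  - apply (filter_imp (fun x => 0 < x < 1)); [|apply at_right_between; lra].
    intros y Hy; apply HW2; lra.
  - apply filterlim_const.
  - now apply continuous_at_right.
Qed.

Lemma W1_nondecreasing x y : x <= y -> y <= 1 -> W1 x <= W1 y.
Proof.
  assert (Hlt : forall z, x <= z -> z < 1 -> W1 x <= W1 z).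
  { intros z Hxz Hz. apply (nondecreasing_of_derive_nonneg W1 W2); [lra|].
    intros t Ht. split; [apply W1_derive | apply W2_nonneg]; lra. }
  intros Hxy Hy. destruct (Rlt_or_le y 1) as [|Hy1]; [now apply Hlt|].
  replace y with 1 by lra. destruct (Req_dec x 1) as [->|Hx1]; [lra|].
  destruct HW as [[_ [_ [HW1 _]]] _].
  apply (filterlim_le (F := at_left 1) (fun _ => W1 x) W1 (W1 x) (W1 1)).
  - apply (filter_imp (fun t => x < t < 1)); [|apply at_left_between; lra].
    intros t Ht; apply Hlt; lra.
  - apply filterlim_const.
  - exact HW1.
Qed.

Lemma W1_at_0 : W1 0 = 0.
Proof.
  set (pr := exist (fun l => derivable_pt_lim W 0 l) (W1 0)
               (proj1 (is_derive_Reals W 0 (W1 0)) (W_derive 0 ltac:(lra)))).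
  apply (deriv_minimum W (-1) 1 0 pr); [lra | lra|].
  intros x _ Hx. rewrite W_at_0. apply W_nonneg; lra.
Qed.

Lemma W1_nonneg x : 0 <= x <= 1 -> 0 <= W1 x.
Proof. intros Hx. rewrite <- W1_at_0. apply W1_nondecreasing; lra. Qed.

Variable t0 : R.
Hypothesis Hlub : is_lub (fun t => 0 <= t < 1 /\ W t = 0) t0.

Lemma t0_nonneg : 0 <= t0.
Proof. apply Hlub. split; [lra | apply W_at_0]. Qed.

Lemma t0_le_1 : t0 <= 1.
Proof. apply Hlub. intros t Ht; lra. Qed.

Lemma W1_eq0_below_t0 x : 0 < x < 1 -> x <= t0 -> W1 x = 0.
Proof.
  assert (Hlt : forall y, 0 < y < t0 -> W1 y <= 0).
  { intros y Hy.
    destruct (is_lub_exists_gt _ t0 y Hlub) as [t [[Ht Wt] Hyt]]; [lra|].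
    destruct (MVT_closed W W1 y t) as [c [Hc E]]; [lra | intros; apply W_derive; lra|].
    assert (W1 y <= W1 c) by (apply W1_nondecreasing; lra).
    assert (0 <= W y) by (apply W_nonneg; lra).
    rewrite Wt in E. nra. }
  intros Hx Hxt. apply Rle_antisym; [|apply W1_nonneg; lra].
  destruct (Rlt_or_le x t0) as [|Hxt']; [apply Hlt; lra|].
  apply (filterlim_le (F := at_left x) W1 (fun _ => 0) (W1 x) 0).
  - apply (filter_imp (fun y => 0 < y < x)); [|apply at_left_between; lra].
    intros y Hy; apply Hlt; lra.
  - apply continuous_at_left, (is_derive_continuous _ _ (W2 x)), W1_derive; lra.
  - apply filterlim_const.
Qed.

Lemma W1_pos_above_t0 v : t0 < v < 1 -> 0 < W1 v.
Proof.
  intros Hv. assert (Ht0 := t0_nonneg).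
  destruct (Rle_lt_or_eq_dec 0 (W1 v)) as [|Hv0]; [apply W1_nonneg; lra | easy |].
  exfalso.
  assert (Wv : W v = 0).
  { destruct (MVT_closed W W1 0 v) as [c [Hc E]]; [lra | intros; apply W_derive; lra|].
    assert (W1 c <= W1 v) by (apply W1_nondecreasing; lra).
    assert (0 <= W1 c) by (apply W1_nonneg; lra).
    rewrite W_at_0 in E. nra. }
  enough (v <= t0) by lra. apply Hlub. split; [lra | exact Wv].
Qed.

(* If t0 = 1, zeros of W accumulate at 1 and W' vanishes between them, so W'(1) <= 0. *)
Lemma t0_lt_1 : W1 1 > 0 -> t0 < 1.
Proof.
  intros Hpos. destruct (Rlt_or_le t0 1) as [|Hge]; [easy|].
  assert (Ht0 : t0 = 1) by (generalize t0_le_1; lra).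
  enough (W1 1 <= 0) by lra.
  apply (filterlim_le (F := at_left 1) W1 (fun _ => 0) (W1 1) 0).
  - apply (filter_imp (fun y => 0 < y < 1)); [|apply at_left_between; lra].
    intros y Hy.
    destruct (is_lub_exists_gt _ t0 y Hlub) as [t1 [[Ht1 E1] Hyt1]]; [lra|].
    destruct (is_lub_exists_gt _ t0 t1 Hlub) as [t2 [[Ht2 E2] Ht12]]; [lra|].
    destruct (MVT_closed W W1 t1 t2) as [c [Hc E]]; [lra | intros; apply W_derive; lra|].
    rewrite E1, E2 in E.
    assert (W1 c = 0) by (apply (Rmult_eq_reg_r (t2 - t1)); lra).
    assert (W1 y <= W1 c) by (apply W1_nondecreasing; lra). lra.
  - now destruct HW as [[_ [_ [HW1 _]]] _].
  - apply filterlim_const.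
Qed.

End Potential.

(** * The radial equation *)

Definition radial_ode (N : nat) (W1 : R -> R) (T : R) (u du ddu : R -> R) : Prop :=
  forall s, 0 < s < T -> is_derive u s (du s) /\ is_derive du s (ddu s) /\
    ddu s + (INR N - 1) / s * du s - (INR N - 1) / s ^ 2 * u s = - W1 (1 - u s ^ 2) * u s.

Lemma radial_ode_le N W1 T T' u du ddu :
  T' <= T -> radial_ode N W1 T u du ddu -> radial_ode N W1 T' u du ddu.
Proof. intros HT' H s Hs; apply H; lra. Qed.

Lemma radial_ode_at_left N W1 T u du ddu x :
  radial_ode N W1 T u du ddu -> filterlim u (at_left T) (locally (u T)) ->
  0 < x <= T -> filterlim u (at_left x) (locally (u x)).
Proof.
  intros Hu HuT Hx. destruct (Req_dec x T) as [->|]; [exact HuT|].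
  apply continuous_at_left, (is_derive_continuous _ _ (du x)), Hu; lra.
Qed.

Lemma pow_le_1 c n : 0 <= c <= 1 -> c ^ n <= 1.
Proof. intros Hc. rewrite <- (pow1 n). apply pow_incr; lra. Qed.

Section RadialODE.

Variables (N : nat) (W1 : R -> R).
Hypothesis HN : (2 <= N)%nat.
Hypothesis HW1_mono : forall x y, 0 <= x -> x <= y -> y <= 1 -> W1 x <= W1 y.
Hypothesis HW1_nonneg : forall x, 0 <= x <= 1 -> 0 <= W1 x.

Let K := (N - 1)%nat.

Lemma INR_K : INR K = INR N - 1.
Proof. unfold K. rewrite minus_INR by lia. simpl; ring. Qed.

Lemma INR_K_ge_1 : 1 <= INR N - 1.
Proof. apply le_INR in HN. simpl in HN. lra. Qed.

Lemma pow_K x : x ^ K = x * x ^ pred K.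
Proof. unfold K. destruct N as [|[|n]]; [lia | lia | reflexivity]. Qed.

Lemma pow_K_le_self x : 0 <= x <= 1 -> x ^ K <= x.
Proof.
  intros Hx. rewrite pow_K.
  assert (x ^ pred K <= 1) by now apply pow_le_1. nra.
Qed.

Section Flux.

Variables (T : R) (w dw ddw : R -> R).
Hypothesis HT : 0 < T.
Hypothesis Hw : radial_ode N W1 T w dw ddw.
Hypothesis Hw01 : forall s, 0 < s < T -> 0 <= w s <= 1.
Hypothesis Hdw : forall s, 0 < s < T -> 0 <= dw s.

Let flux t := t ^ K * dw t.

Lemma flux_derive t : 0 < t < T ->
  is_derive flux t
    (t ^ K * ((INR N - 1) / t ^ 2 * w t - W1 (1 - w t ^ 2) * w t)).
Proof.
  intros Ht. destruct (Hw t Ht) as [_ [Ddw Hode]].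
  eapply is_derive_eq; [apply (Derive.is_derive_mult _ _ _ _ _ (is_derive_Rpow K t) Ddw)|].
  replace (ddw t) with (- W1 (1 - w t ^ 2) * w t - (INR N - 1) / t * dw t
                        + (INR N - 1) / t ^ 2 * w t) by (rewrite <- Hode; ring).
  rewrite INR_K, pow_K. field. lra.
Qed.

Lemma flux_le t s : 0 < t -> t < s -> s <= 1 -> s < T ->
  flux t <= flux s + W1 1 * s.
Proof.
  intros Ht Hts Hs1 HsT.
  destruct (MVT_closed flux
              (fun t => t ^ K * ((INR N - 1) / t ^ 2 * w t - W1 (1 - w t ^ 2) * w t)) t s)
    as [c [Hc E]];
    [lra | intros; apply flux_derive; lra |].
  assert (0 <= w c <= 1) by (apply Hw01; lra).
  assert (0 <= W1 (1 - w c ^ 2) <= W1 1) by (split; [apply HW1_nonneg | apply HW1_mono]; nra).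
  assert (0 <= c ^ K <= 1) by (split; [apply pow_le | apply pow_le_1]; lra).
  assert (0 <= (INR N - 1) / c ^ 2 * w c).
  { apply Rmult_le_pos; [|lra].
    apply Rdiv_le_0_compat; [generalize INR_K_ge_1; lra | apply pow_lt; lra]. }
  assert (W1 (1 - w c ^ 2) * w c <= W1 1) by nra.
  assert (c ^ K * ((INR N - 1) / c ^ 2 * w c - W1 (1 - w c ^ 2) * w c) >= - W1 1) by nra.
  nra.
Qed.

(* A flux bounded below by eta gives w' >= eta / s, so w would grow like eta |ln s| as
   s -> 0, which is impossible for 0 <= w <= 1. *)
Lemma flux_small_somewhere sg eta : 0 < sg <= 1 -> sg < T -> 0 < eta ->
  exists s, 0 < s < sg /\ flux s < eta.
Proof.
  intros Hsg HsgT Heta. apply NNPP; intros Hn.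
  assert (Hlow : forall s, 0 < s < sg -> 0 <= dw s - eta * / s).
  { intros s Hs.
    assert (eta <= flux s) by (apply Rnot_lt_le; intros Hl; apply Hn; now exists s).
    assert (s ^ K <= s) by (apply pow_K_le_self; lra). unfold flux in *.
    assert (0 <= dw s) by (apply Hdw; lra).
    assert (eta * / s <= dw s) by (apply Rle_div_l; nra).
    lra. }
  set (b := sg / 2). set (a := b * exp (- (/ eta + 1))).
  assert (Hexp : exp (- (/ eta + 1)) < exp 0).
  { apply exp_increasing. assert (0 < / eta) by (apply Rinv_0_lt_compat; lra). lra. }
  rewrite exp_0 in Hexp.
  assert (Ha : 0 < a < b) by (assert (0 < exp (- (/ eta + 1))) by apply exp_pos; unfold a, b; nra).
  assert (Hln : ln a = ln b - (/ eta + 1)).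
  { unfold a. rewrite ln_mult, ln_exp; [ring | unfold b; lra | apply exp_pos]. }
  assert (Hgrow : w a - eta * ln a <= w b - eta * ln b).
  { apply (nondecreasing_of_derive_nonneg (fun s => w s - eta * ln s) (fun s => dw s - eta * / s));
      [lra|].
    intros s Hs. split; [|apply Hlow; unfold b in *; lra].
    apply is_derive_Rminus; [apply Hw; unfold b in *; lra|].
    apply is_derive_scal, is_derive_ln; lra. }
  assert (0 <= w a <= 1) by (apply Hw01; unfold b in *; lra).
  assert (0 <= w b <= 1) by (apply Hw01; unfold b in *; lra).
  rewrite Hln in Hgrow. replace (eta * (ln b - (/ eta + 1))) with (eta * ln b - 1 - eta) in Hgrow
    by (field; lra).
  lra.
Qed.

Lemma flux_vanishes_at_0 eta : 0 < eta -> at_right 0 (fun t => flux t < eta).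
Proof.
  intros Heta. set (M := W1 1). assert (HM : 0 <= M) by (apply HW1_nonneg; lra).
  set (sg := Rmin (Rmin 1 (T / 2)) (eta / (2 * M + 2))).
  assert (sg <= Rmin 1 (T / 2)) by apply Rmin_l.
  assert (Rmin 1 (T / 2) <= 1) by apply Rmin_l. assert (Rmin 1 (T / 2) <= T / 2) by apply Rmin_r.
  assert (Hsg : sg <= eta / (2 * M + 2)) by apply Rmin_r.
  assert (0 < sg) by (apply Rmin_glb_lt; [apply Rmin_glb_lt | apply Rdiv_lt_0_compat]; lra).
  destruct (flux_small_somewhere sg (eta / 2)) as [s [Hs Hflux]]; [lra | lra | lra |].
  apply (filter_imp (fun t => 0 < t < s)); [|now apply at_right_between].
  intros t Ht. assert (flux t <= flux s + M * s) by (apply flux_le; lra).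
  assert (M * s <= M * (eta / (2 * M + 2))) by (apply Rmult_le_compat_l; lra).
  assert (M * (eta / (2 * M + 2)) < eta / 2).
  { apply (Rmult_lt_reg_r (2 * M + 2)); [lra|]. field_simplify; nra. }
  lra.
Qed.

End Flux.

Section Comparison.

Variables (T : R) (u du ddu v dv ddv : R -> R).
Hypothesis HT : 0 < T.
Hypothesis Hu : radial_ode N W1 T u du ddu.
Hypothesis Hv : radial_ode N W1 T v dv ddv.
Hypothesis Hu01 : forall s, 0 < s <= T -> 0 <= u s <= 1.
Hypothesis Hv01 : forall s, 0 < s <= T -> 0 < v s <= 1.
Hypothesis Hdu : forall s, 0 < s < T -> 0 <= du s.
Hypothesis Hdv : forall s, 0 < s < T -> 0 <= dv s.
Hypothesis Hu_left : filterlim u (at_left T) (locally (u T)).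
Hypothesis Hv_left : filterlim v (at_left T) (locally (v T)).
Hypothesis HuvT : u T <= v T.

Let wronskian s := s ^ K * (du s * v s - u s * dv s).

Lemma wronskian_derive x : 0 < x < T ->
  is_derive wronskian x (x ^ K * (u x * v x * (W1 (1 - v x ^ 2) - W1 (1 - u x ^ 2)))).
Proof.
  intros Hx. destruct (Hu x Hx) as [Du [Ddu Hode_u]]. destruct (Hv x Hx) as [Dv [Ddv Hode_v]].
  eapply is_derive_eq.
  - apply (Derive.is_derive_mult (fun s => s ^ K) (fun s => du s * v s - u s * dv s));
      [apply is_derive_Rpow|].
    apply is_derive_Rminus; apply Derive.is_derive_mult; eauto.
  - replace (ddu x) with (- W1 (1 - u x ^ 2) * u x - (INR N - 1) / x * du x
                          + (INR N - 1) / x ^ 2 * u x) by (rewrite <- Hode_u; ring).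
    replace (ddv x) with (- W1 (1 - v x ^ 2) * v x - (INR N - 1) / x * dv x
                          + (INR N - 1) / x ^ 2 * v x) by (rewrite <- Hode_v; ring).
    rewrite INR_K, pow_K. field. lra.
Qed.

Lemma wronskian_nondecreasing x y : 0 < x -> x <= y -> y < T ->
  (forall z, x <= z <= y -> v z <= u z) -> wronskian x <= wronskian y.
Proof.
  intros Hx Hxy HyT Hvu.
  apply (nondecreasing_of_derive_nonneg wronskian
           (fun x => x ^ K * (u x * v x * (W1 (1 - v x ^ 2) - W1 (1 - u x ^ 2)))) x y Hxy).
  intros z Hz.
  split; [apply wronskian_derive; lra|].
  assert (0 <= u z <= 1) by (apply Hu01; lra). assert (0 < v z <= 1) by (apply Hv01; lra).
  assert (W1 (1 - u z ^ 2) <= W1 (1 - v z ^ 2))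
    by (assert (v z <= u z) by (apply Hvu; lra); apply HW1_mono; nra).
  assert (0 <= z ^ K) by (apply pow_le; lra).
  apply Rmult_le_pos; [easy|]. apply Rmult_le_pos; nra.
Qed.

Lemma wronskian_nonneg_at_contact a s : 0 < a -> a < s -> s < T -> u a = v a ->
  (forall x, a < x <= s -> v x < u x) -> 0 <= wronskian a.
Proof.
  intros Ha Has HsT Heq Hvu.
  destruct (Hu a ltac:(lra)) as [Du _]. destruct (Hv a ltac:(lra)) as [Dv _].
  assert (0 <= du a - dv a).
  { apply (derive_nonneg_of_right_le (fun t => u t - v t) a _ (s - a)); [lra | |].
    - intros h Hh. assert (v (a + h) < u (a + h)) by (apply Hvu; lra). lra.
    - now apply is_derive_Rminus. }
  assert (0 < v a) by (apply Hv01; lra). assert (0 <= a ^ K) by (apply pow_le; lra).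
  unfold wronskian. rewrite Heq.
  replace (du a * v a - v a * dv a) with (v a * (du a - dv a)) by ring.
  apply Rmult_le_pos; [easy|]. apply Rmult_le_pos; lra.
Qed.

(* Near 0 the Wronskian is bounded below by minus the flux of v, which tends to 0. *)
Lemma wronskian_nonneg_from_0 x : 0 < x < T ->
  (forall z, 0 < z <= x -> v z < u z) -> 0 <= wronskian x.
Proof.
  intros Hx Hvu. apply Rnot_lt_le; intros Hneg.
  assert (Hv01' : forall s, 0 < s < T -> 0 <= v s <= 1)
    by (intros s Hs; assert (0 < v s <= 1) by (apply Hv01; lra); lra).
  assert (Hev : at_right 0 (fun t => t ^ K * dv t < - wronskian x /\ 0 < t < x)).
  { apply filter_and; [apply (flux_vanishes_at_0 T v dv ddv) | apply at_right_between]; auto; lra. }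
  destruct (filter_ex (F := at_right 0) _ Hev) as [t [Hflux Ht]].
  assert (wronskian t <= wronskian x)
    by (apply wronskian_nondecreasing; try lra; intros z Hz; left; apply Hvu; lra).
  assert (0 <= u t <= 1) by (apply Hu01; lra). assert (0 < v t <= 1) by (apply Hv01; lra).
  assert (0 <= du t) by (apply Hdu; lra). assert (0 <= dv t) by (apply Hdv; lra).
  assert (0 <= t ^ K) by (apply pow_le; lra).
  assert (- (t ^ K * dv t) <= wronskian t).
  { unfold wronskian.
    assert (0 <= t ^ K * du t * v t) by (apply Rmult_le_pos; [apply Rmult_le_pos|]; lra).
    assert (0 <= t ^ K * dv t * (1 - u t)) by (apply Rmult_le_pos; [apply Rmult_le_pos|]; lra).
    nra. }
  lra.
Qed.

Lemma ratio_nondecreasing x y : 0 < x -> x <= y -> y < T ->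
  (forall z, x <= z <= y -> 0 <= wronskian z) -> u x / v x <= u y / v y.
Proof.
  intros Hx Hxy HyT Hwr.
  apply (nondecreasing_of_derive_nonneg (fun s => u s / v s)
           (fun s => wronskian s / (s ^ K * v s ^ 2)) x y Hxy).
  intros z Hz. assert (0 < v z <= 1) by (apply Hv01; lra). split.
  - eapply is_derive_eq.
    + apply is_derive_div; [apply Hu | apply Hv | ]; lra.
    + unfold wronskian. field. split; [lra | apply pow_nonzero; lra].
  - apply Rdiv_le_0_compat; [apply Hwr; lra|].
    apply Rmult_lt_0_compat; [apply pow_lt | ]; nra.
Qed.

Lemma wronskian_nonneg_on_component a s b : 0 <= a < s -> s < b -> b <= T ->
  (0 < a -> u a = v a) -> (forall x, a < x < b -> v x < u x) ->
  forall x, s <= x < b -> 0 <= wronskian x.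
Proof.
  intros Ha Hsb HbT Hcontact Hvu x Hx. destruct (Req_dec a 0) as [Ha0|Ha0].
  - apply wronskian_nonneg_from_0; [lra|]. intros z Hz; apply Hvu; lra.
  - assert (Huva : u a = v a) by (apply Hcontact; lra).
    apply Rle_trans with (wronskian a).
    + apply (wronskian_nonneg_at_contact a s); try lra. intros z Hz; apply Hvu; lra.
    + apply wronskian_nondecreasing; try lra.
      intros z Hz. destruct (Req_dec z a) as [->|]; [lra|]. left; apply Hvu; lra.
Qed.

(* On the component (a, b) of {v < u} containing s, u/v stays above u(s)/v(s) > 1,
   which is incompatible with u(b) <= v(b). *)
Theorem radial_comparison s : 0 < s < T -> u s <= v s.
Proof.
  intros Hs. apply Rnot_lt_le; intros Hvu.
  set (g := fun x => u x - v x).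
  assert (Hg : forall x, 0 < x < T -> continuous g x).
  { intros x Hx. destruct (Hu x Hx) as [Du _]. destruct (Hv x Hx) as [Dv _].
    exact (is_derive_continuous g x _ (is_derive_Rminus u v x _ _ Du Dv)). }
  destruct (last_nonpositive_before g s) as (a & Ha & Hga & Hpos_a);
    [lra | unfold g; lra | intros; apply Hg; lra |].
  destruct (first_nonpositive_after g s T) as (b & Hb & Hgb & Hpos_b);
    [lra | unfold g; lra | unfold g; lra | intros; apply Hg; lra |].
  unfold g in *.
  assert (Hvu_ab : forall x, a < x < b -> v x < u x).
  { intros x Hx. destruct (Rle_or_lt x s).
    - specialize (Hpos_a x ltac:(lra)); lra.
    - specialize (Hpos_b x ltac:(lra)); lra. }
  assert (Hwr := wronskian_nonneg_on_component a s b ltac:(lra) ltac:(lra) ltac:(lra)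
                   ltac:(intros Ha0; specialize (Hga Ha0); lra) Hvu_ab).
  assert (0 < v s <= 1) by (apply Hv01; lra).
  set (rho := u s / v s).
  assert (Hrho : 1 < rho) by (unfold rho; apply (Rmult_lt_reg_r (v s)); [lra | field_simplify; lra]).
  assert (Hratio : forall x, s <= x < b -> rho * v x <= u x).
  { intros x Hx. assert (0 < v x <= 1) by (apply Hv01; lra).
    assert (rho <= u x / v x) by (apply ratio_nondecreasing; try lra; intros; apply Hwr; lra).
    replace (u x) with (u x / v x * v x) by (field; lra). nra. }
  assert (rho * v b <= u b).
  { apply (filterlim_le (F := at_left b) (fun x => rho * v x) u (rho * v b) (u b)).
    - apply (filter_imp (fun x => s < x < b)); [|apply at_left_between; lra].
      intros x Hx; apply Hratio; lra.
    - apply filterlim_Rmult_l, (radial_ode_at_left N W1 T v dv ddv); auto; lra.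
    - apply (radial_ode_at_left N W1 T u du ddu); auto; lra. }
  assert (0 < v b <= 1) by (apply Hv01; lra). nra.
Qed.

End Comparison.

(* The substitution z = u'/u + K/(2s) turns the equation into a Riccati inequality. *)
Lemma radial_ode_riccati T u du ddu y A :
  radial_ode N W1 T u du ddu -> 0 < A -> 2 * A < T -> 0 < y < 1 ->
  (forall s, A <= s <= 2 * A -> 0 < u s <= y) ->
  A ^ 2 * W1 (1 - y ^ 2) < (INR N - 1) ^ 2 / 4 + (INR N - 1) / 2 + 16.
Proof.
  intros Hu HA HAT Hy Huy. apply Rnot_le_lt; intros HAm.
  set (k := INR N - 1). set (m := W1 (1 - y ^ 2)). set (CN := k ^ 2 / 4 + k / 2).
  fold k m CN in HAm.
  assert (Hk : 1 <= k) by apply INR_K_ge_1.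
  set (q := m - CN / A ^ 2).
  assert (HqA : q * A ^ 2 >= 16) by (unfold q; field_simplify; lra).
  assert (Hq : 0 < q) by nra.
  set (z := fun s => du s / u s + k / 2 * / s).
  set (dz := fun s => (ddu s * u s - du s * du s) / u s ^ 2 + k / 2 * (- 1 / s ^ 2)).
  assert (Hz : forall s, A <= s <= 2 * A -> is_derive z s (dz s) /\ dz s <= - (q + z s ^ 2)).
  { intros s Hs. destruct (Hu s ltac:(lra)) as [Du [Ddu Hode]].
    assert (0 < u s <= y) by (apply Huy; lra). split.
    - apply is_derive_Rplus; [apply is_derive_div; auto; lra|].
      apply is_derive_scal. eapply is_derive_eq.
      + apply is_derive_inv; [apply (is_derive_id (K := R_AbsRing)) | lra].
      + reflexivity.
    - assert (E : dz s + (q + z s ^ 2) = (m - W1 (1 - u s ^ 2)) + (CN / s ^ 2 - CN / A ^ 2)).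
      { unfold dz, z, q, CN.
        replace (ddu s) with (- W1 (1 - u s ^ 2) * u s - k / s * du s + k / s ^ 2 * u s)
          by (rewrite <- Hode; unfold k; ring).
        field. lra. }
      assert (m <= W1 (1 - u s ^ 2)) by (apply HW1_mono; nra).
      assert (CN / s ^ 2 <= CN / A ^ 2).
      { apply Rmult_le_compat_l; [unfold CN; nra|]. apply Rinv_le_contravar; nra. }
      lra. }
  assert (Hlen := riccati_interval_bound z dz q A (2 * A) Hq ltac:(lra) Hz).
  assert (4 <= sqrt q * A).
  { rewrite <- sqrt_Rsqr with (x := A) by lra. rewrite <- sqrt_mult by (unfold Rsqr; nra).
    rewrite <- sqrt_Rsqr with (x := 4) by lra. apply sqrt_le_1_alt. unfold Rsqr; nra. }
  assert (PI <= 4) by apply PI_4. lra.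
Qed.

Lemma radial_ode_derive_du_add_u_div_s T u du ddu s :
  radial_ode N W1 T u du ddu -> 0 < s < T ->
  is_derive (fun s => du s + (INR N - 1) * (u s / s)) s (- W1 (1 - u s ^ 2) * u s).
Proof.
  intros Hu Hs. destruct (Hu s Hs) as [Du [Ddu Hode]].
  eapply is_derive_eq.
  - apply is_derive_Rplus; [exact Ddu|].
    apply is_derive_scal, is_derive_div; [exact Du | apply (is_derive_id (K := R_AbsRing)) | lra].
  - rewrite <- Hode. change (one : R) with 1. field. lra.
Qed.

(* Where W'(1 - u^2) = 0 the quantity u' + K u/s is constant; if u reached c before T/8 it
   would force u' > 4K/T on [T/4, T/2], so u would increase by more than K >= 1. *)
Lemma radial_ode_linear_regime T u du ddu c s1 :
  radial_ode N W1 T u du ddu -> 0 < T ->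
  (forall s, 0 < s < T -> 0 < u s < 1) ->
  (forall s t, 0 < s -> s <= t -> t < T -> u s <= u t) ->
  0 < s1 < T -> u s1 = c ->
  (forall s, 0 < s < T -> c <= u s -> W1 (1 - u s ^ 2) = 0) -> c * T / 8 <= s1.
Proof.
  intros Hu HT Hu01 Hmon Hs1 Hc HW0. apply Rnot_lt_le; intros Hlt.
  set (k := INR N - 1). assert (Hk : 1 <= k) by apply INR_K_ge_1.
  assert (Hc01 : 0 < c < 1) by (rewrite <- Hc; apply Hu01; auto).
  assert (Hs1T : s1 < T / 8) by nra.
  assert (Hdu1 : 0 <= du s1).
  { apply (derive_nonneg_of_right_le u s1 _ (T - s1)); [lra | | apply Hu; lra].
    intros h Hh. apply Hmon; lra. }
  assert (Hdu_mid : forall x, T / 4 <= x <= T / 2 -> 4 * k / T < du x).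
  { intros x Hx.
    destruct (MVT_closed (fun s => du s + k * (u s / s)) (fun s => - W1 (1 - u s ^ 2) * u s) s1 x)
      as [c' [Hc' E]]; [lra | intros; apply (radial_ode_derive_du_add_u_div_s T _ _ ddu); auto; lra|].
    rewrite HW0 in E by (try rewrite <- Hc; try apply Hmon; lra).
    rewrite Hc in E.
    assert (8 / T < c / s1) by (apply (Rmult_lt_reg_r (s1 * T)); [nra | field_simplify; nra]).
    assert (0 < u x < 1) by (apply Hu01; lra).
    assert (u x / x <= 4 / T) by (apply (Rmult_le_reg_r (x * T)); [nra | field_simplify; nra]).
    assert (k * (8 / T) - k * (4 / T) = 4 * k / T) by (field; lra).
    nra. }
  destruct (MVT_closed u du (T / 4) (T / 2)) as [x [Hx E]]; [lra | intros; apply Hu; lra |].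
  assert (0 < u (T / 2) < 1) by (apply Hu01; lra). assert (0 < u (T / 4) < 1) by (apply Hu01; lra).
  assert (du x * (T / 2 - T / 4) > 4 * k / T * (T / 2 - T / 4))
    by (apply Rmult_lt_compat_r; [lra | now apply Hdu_mid]).
  assert (4 * k / T * (T / 2 - T / 4) = k) by (field; lra).
  lra.
Qed.

End RadialODE.

(** * Radial profiles *)

Lemma mul_le_1_of_le_inv eps s : 0 < eps -> s <= 1 / eps -> eps * s <= 1.
Proof.
  intros He Hs. apply (Rmult_le_compat_l eps) in Hs; [|lra].
  now replace (eps * (1 / eps)) with 1 in Hs by (field; lra).
Qed.

Lemma mul_lt_1_of_lt_inv eps s : 0 < eps -> s < 1 / eps -> eps * s < 1.
Proof.
  intros He Hs. apply (Rmult_lt_compat_l eps) in Hs; [|lra].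
  now replace (eps * (1 / eps)) with 1 in Hs by (field; lra).
Qed.

Section Profile.

Variables (N : nat) (W1 : R -> R) (eps : R) (f finv : R -> R).
Hypothesis Heps : 0 < eps.
Hypothesis Hf : radial_profile N W1 eps f.
Hypothesis Hfinv : inverse01 f finv.

Lemma profile_incr x y : 0 <= x -> x < y -> y <= 1 -> f x < f y.
Proof. destruct Hf as [_ [_ [_ [_ [_ H]]]]]. auto. Qed.

Lemma profile_le x y : 0 <= x -> x <= y -> y <= 1 -> f x <= f y.
Proof. intros. destruct (Req_dec x y) as [->|]; [lra|]. left; apply profile_incr; lra. Qed.

Lemma profile_at_0 : f 0 = 0.
Proof. now destruct Hf as [_ [_ [_ [_ [H _]]]]]. Qed.

Lemma profile_at_1 : f 1 = 1.
Proof. now destruct Hf as [_ [H _]]. Qed.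

Lemma profile_range x : 0 <= x <= 1 -> 0 <= f x <= 1.
Proof. intros. rewrite <- profile_at_0, <- profile_at_1 at 1. split; apply profile_le; lra. Qed.

Lemma profile_pos x : 0 < x <= 1 -> 0 < f x.
Proof. intros. rewrite <- profile_at_0. apply profile_incr; lra. Qed.

Lemma profile_lt_1 x : 0 <= x < 1 -> f x < 1.
Proof. intros. rewrite <- profile_at_1. apply profile_incr; lra. Qed.

Lemma profile_inv_spec y : 0 <= y <= 1 -> 0 <= finv y <= 1 /\ f (finv y) = y.
Proof. destruct Hfinv as [_ H]. auto. Qed.

Lemma profile_inv_f x : 0 <= x <= 1 -> finv (f x) = x.
Proof. destruct Hfinv as [H _]. auto. Qed.

Lemma profile_inv_range y : 0 < y < 1 -> 0 < finv y < 1.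
Proof.
  intros Hy. destruct (profile_inv_spec y ltac:(lra)) as [Hr Hfy].
  split; apply Rnot_ge_lt; intros Hn.
  - replace (finv y) with 0 in Hfy by lra. rewrite profile_at_0 in Hfy. lra.
  - replace (finv y) with 1 in Hfy by lra. rewrite profile_at_1 in Hfy. lra.
Qed.

(* f is increasing and onto [0, 1], so it has no jumps. *)
Lemma profile_at_left x : 0 < x <= 1 -> filterlim f (at_left x) (locally (f x)).
Proof.
  intros Hx. apply filterlim_locally. intros e. assert (He := cond_pos e).
  assert (Hfx : 0 < f x <= 1) by (split; [apply profile_pos | apply profile_range]; lra).
  destruct (Rle_or_lt (f x) (e / 2)) as [Hsmall|Hlarge].
  - apply (filter_imp (fun r => 0 < r < x)); [|apply at_left_between; lra].
    intros r Hr. apply Rabs_ball, Rabs_def1;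
      [assert (f r <= f x) by (apply profile_le; lra) | assert (0 <= f r) by (apply profile_range; lra)];
      lra.
  - destruct (profile_inv_spec (f x - e / 2) ltac:(lra)) as [Hr0 Hfr0].
    set (r0 := finv (f x - e / 2)) in *.
    assert (r0 < x) by (apply Rnot_le_lt; intros Hn;
                        assert (f x <= f r0) by (apply profile_le; lra); lra).
    apply (filter_imp (fun r => r0 < r < x)); [|apply at_left_between; lra].
    intros r Hr. assert (f r0 < f r) by (apply profile_incr; lra).
    assert (f r <= f x) by (apply profile_le; lra).
    apply Rabs_ball, Rabs_def1; lra.
Qed.

Lemma profile_ode r : 0 < r < 1 ->
  is_derive f r (Derive f r) /\ is_derive (Derive f) r (Derive (Derive f) r) /\
  Derive (Derive f) r + (INR N - 1) / r * Derive f r - (INR N - 1) / r ^ 2 * f r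
    = - (1 / eps ^ 2) * W1 (1 - f r ^ 2) * f r.
Proof.
  destruct Hf as [H _]. intros Hr. destruct (H r Hr) as [Df [Ddf Hode]].
  repeat split; auto; now apply Derive_correct.
Qed.

Lemma profile_derive_nonneg r : 0 < r < 1 -> 0 <= Derive f r.
Proof.
  intros Hr. apply (derive_nonneg_of_right_le f r _ (1 - r)); [lra | | apply profile_ode; lra].
  intros h Hh. apply profile_le; lra.
Qed.

Lemma profile_rescaled : radial_ode N W1 (1 / eps) (fun s => f (eps * s))
  (fun s => eps * Derive f (eps * s)) (fun s => eps ^ 2 * Derive (Derive f) (eps * s)).
Proof.
  intros s Hs.
  assert (Hr : 0 < eps * s < 1) by (split; [nra | apply mul_lt_1_of_lt_inv; lra]).
  destruct (profile_ode _ Hr) as [Df [Ddf Hode]].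
  split; [now apply is_derive_comp_scal|].
  split; [eapply is_derive_eq; [apply is_derive_scal, is_derive_comp_scal, Ddf | simpl; ring]|].
  replace (eps ^ 2 * Derive (Derive f) (eps * s) + (INR N - 1) / s * (eps * Derive f (eps * s))
             - (INR N - 1) / s ^ 2 * f (eps * s))
    with (eps ^ 2 * (Derive (Derive f) (eps * s) + (INR N - 1) / (eps * s) * Derive f (eps * s)
                     - (INR N - 1) / (eps * s) ^ 2 * f (eps * s))) by (field; lra).
  rewrite Hode. field. lra.
Qed.

Lemma rescaled_range s : 0 < s <= 1 / eps -> 0 < f (eps * s) <= 1.
Proof.
  intros Hs. assert (eps * s <= 1) by (apply mul_le_1_of_le_inv; lra).
  split; [apply profile_pos | apply profile_range]; nra.
Qed.

Lemma rescaled_lt_1 s : 0 < s < 1 / eps -> f (eps * s) < 1.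
Proof.
  intros Hs. assert (eps * s < 1) by (apply mul_lt_1_of_lt_inv; lra).
  apply profile_lt_1; nra.
Qed.

Lemma rescaled_derive_nonneg s : 0 < s < 1 / eps -> 0 <= eps * Derive f (eps * s).
Proof.
  intros Hs. assert (eps * s < 1) by (apply mul_lt_1_of_lt_inv; lra).
  apply Rmult_le_pos; [lra | apply profile_derive_nonneg; nra].
Qed.

Lemma rescaled_at_left T : 0 < T <= 1 / eps ->
  filterlim (fun s => f (eps * s)) (at_left T) (locally (f (eps * T))).
Proof.
  intros HT. eapply filterlim_comp; [now apply filterlim_scal_at_left|].
  apply profile_at_left. split; [nra | apply mul_le_1_of_le_inv; lra].
Qed.

End Profile.

Section Proposition.

Variables (N : nat) (W W1 W2 : R -> R) (f finv : R -> R -> R).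
Hypothesis HN : (2 <= N)%nat.
Hypothesis HW : W_hyp W W1 W2.
Hypothesis Hprof : forall eps, 0 < eps -> radial_profile N W1 eps (f eps).
Hypothesis Hinv : forall eps, 0 < eps -> inverse01 (f eps) (finv eps).

Let W1_mono01 x y : 0 <= x -> x <= y -> y <= 1 -> W1 x <= W1 y.
Proof. intros; now apply (W1_nondecreasing W W1 W2). Qed.

Let W1_nonneg01 x : 0 <= x <= 1 -> 0 <= W1 x.
Proof. now apply (W1_nonneg W W1 W2). Qed.

Lemma profiles_ordered eps eps' r : 0 < eps' -> eps' <= eps -> 0 < r -> r < 1 / eps ->
  f eps' (eps' * r) <= f eps (eps * r).
Proof.
  intros He' Hee Hr HrT. assert (He : 0 < eps) by lra.
  assert (HT : 0 < 1 / eps) by (apply Rdiv_lt_0_compat; lra).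
  assert (HTT : 1 / eps <= 1 / eps') by (apply Rmult_le_compat_l; [lra | apply Rinv_le_contravar; lra]).
  apply (radial_comparison N W1 HN W1_mono01 W1_nonneg01 (1 / eps)
           (fun s => f eps' (eps' * s)) (fun s => eps' * Derive (f eps') (eps' * s))
           (fun s => eps' ^ 2 * Derive (Derive (f eps')) (eps' * s))
           (fun s => f eps (eps * s)) (fun s => eps * Derive (f eps) (eps * s))
           (fun s => eps ^ 2 * Derive (Derive (f eps)) (eps * s))); auto.
  - apply (radial_ode_le _ _ (1 / eps')); [lra | apply profile_rescaled; auto].
  - apply profile_rescaled; auto.
  - intros s Hs. assert (0 < f eps' (eps' * s) <= 1)
      by (apply (rescaled_range N W1); auto; lra). lra.
  - intros s Hs. apply (rescaled_range N W1); auto.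
  - intros s Hs. apply (rescaled_derive_nonneg N W1); auto; lra.
  - intros s Hs. apply (rescaled_derive_nonneg N W1); auto.
  - apply (rescaled_at_left N W1 eps' (f eps') (finv eps')); auto; lra.
  - apply (rescaled_at_left N W1 eps (f eps) (finv eps)); auto; lra.
  - replace (eps * (1 / eps)) with 1 by (field; lra).
    rewrite (profile_at_1 N W1 eps (f eps)) by auto.
    apply (rescaled_range N W1 eps'); auto; lra.
Qed.

Section Threshold.

Hypothesis HW1_1 : W1 1 > 0.
Variable t0 : R.
Hypothesis Hlub : is_lub (fun t => 0 <= t < 1 /\ W t = 0) t0.

Lemma t0_range : 0 <= t0 < 1.
Proof. split; [apply (t0_nonneg W W1 W2) | apply (t0_lt_1 W W1 W2)]; auto. Qed.

Let c := sqrt (1 - t0).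

Lemma c_spec : 0 < c <= 1 /\ c ^ 2 = 1 - t0.
Proof.
  assert (Ht0 := t0_range). assert (c * c = 1 - t0) by (apply sqrt_sqrt; lra).
  assert (0 < c) by (apply sqrt_lt_R0; lra). simpl. split; [split|]; nra.
Qed.

(* Where f^2 >= 1 - t0 the potential term vanishes: the linear regime. *)
Lemma finv_threshold_ge eps : 0 < eps -> c / 8 <= finv eps c.
Proof.
  intros He. destruct c_spec as [Hc Hc2]. assert (Ht0 := t0_range).
  assert (Hp := Hprof eps He). assert (Hi := Hinv eps He).
  destruct (Req_dec t0 0) as [Ht00|Ht00].
  - assert (Hc1 : c = 1) by (unfold c; rewrite Ht00, Rminus_0_r; apply sqrt_1).
    rewrite Hc1. rewrite <- (profile_at_1 N W1 eps (f eps) Hp) at 2.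
    rewrite (profile_inv_f (f eps)); auto; lra.
  - assert (Hc1 : c < 1) by nra.
    destruct (profile_inv_range N W1 eps (f eps) (finv eps) Hp Hi c ltac:(lra)) as [F1 F2].
    destruct (profile_inv_spec (f eps) (finv eps) Hi c ltac:(lra)) as [_ F3].
    assert (c * (1 / eps) / 8 <= finv eps c / eps).
    { apply (radial_ode_linear_regime N W1 HN (1 / eps) (fun s => f eps (eps * s))
               (fun s => eps * Derive (f eps) (eps * s))
               (fun s => eps ^ 2 * Derive (Derive (f eps)) (eps * s)));
        [apply profile_rescaled; auto | apply Rdiv_lt_0_compat; lra | | | | |].
      - intros s Hs. split; [apply (rescaled_range N W1 eps (f eps)) | apply (rescaled_lt_1 N W1)];
          auto; lra.
      - intros s t Hs Hst Ht. assert (eps * t < 1) by (apply mul_lt_1_of_lt_inv; lra).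
        apply (profile_le N W1 eps); auto; nra.
      - split; [apply Rdiv_lt_0_compat; lra|]. unfold Rdiv. apply Rmult_lt_compat_r; [|lra].
        apply Rinv_0_lt_compat; lra.
      - replace (eps * (finv eps c / eps)) with (finv eps c) by (field; lra). exact F3.
      - intros s Hs Hcs. assert (f eps (eps * s) < 1) by (apply (rescaled_lt_1 N W1); auto).
        apply (W1_eq0_below_t0 W W1 W2 HW t0 Hlub); nra. }
    apply (Rmult_le_reg_r (/ eps)); [apply Rinv_0_lt_compat; lra|].
    replace (c / 8 * / eps) with (c * (1 / eps) / 8) by (field; lra). exact H.
Qed.

Lemma finv_threshold_div_eps_lim :
  filterlim (fun eps => finv eps c / eps) (at_right 0) (Rbar_locally p_infty).
Proof.
  intros P [M HM]. unfold filtermap. destruct c_spec as [Hc _].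
  set (M' := Rmax M 1). assert (M <= M') by apply Rmax_l. assert (1 <= M') by apply Rmax_r.
  apply (filter_imp (fun e => 0 < e < c / (8 * M'))); [|apply at_right_between, Rdiv_lt_0_compat; lra].
  intros e He. apply HM.
  assert (c / 8 <= finv e c) by (apply finv_threshold_ge; lra).
  assert (e * (8 * M') < c).
  { assert (Hlt := Rmult_lt_compat_r (8 * M') e (c / (8 * M')) ltac:(lra) (proj2 He)).
    now replace (c / (8 * M') * (8 * M')) with c in Hlt by (field; lra). }
  apply (Rmult_lt_reg_r e); [lra|]. replace (finv e c / e * e) with (finv e c) by (field; lra).
  nra.
Qed.

Lemma profile_below_threshold a : 0 < a -> exists epsa, 0 < epsa /\
  forall eps r, 0 < eps <= epsa -> 0 <= r <= a * eps -> r <= 1 -> f eps r ^ 2 <= 1 - t0.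
Proof.
  intros Ha. destruct c_spec as [Hc Hc2].
  exists (c / (8 * a)). split; [apply Rdiv_lt_0_compat; lra|].
  intros eps r He Hr Hr1. assert (Hp := Hprof eps ltac:(lra)). assert (Hi := Hinv eps ltac:(lra)).
  assert (c / 8 <= finv eps c) by (apply finv_threshold_ge; lra).
  assert (a * eps <= c / 8).
  { assert (Hle := Rmult_le_compat_l a eps (c / (8 * a)) ltac:(lra) (proj2 He)).
    now replace (a * (c / (8 * a))) with (c / 8) in Hle by (field; lra). }
  destruct (profile_inv_spec (f eps) (finv eps) Hi c ltac:(lra)) as [F1 F2].
  assert (f eps r <= c) by (rewrite <- F2; apply (profile_le N W1 eps); auto; lra).
  assert (0 <= f eps r) by (apply (profile_range N W1 eps); auto; lra).
  rewrite <- Hc2. nra.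
Qed.

Section Level.

Variable delta : R.
Hypothesis Hdelta : 0 < delta < 1 - t0.

Let y := sqrt (1 - t0 - delta).

Lemma y_spec : 0 < y < 1 /\ y ^ 2 = 1 - t0 - delta.
Proof.
  assert (Ht0 := t0_range). assert (y * y = 1 - t0 - delta) by (apply sqrt_sqrt; lra).
  assert (0 < y) by (apply sqrt_lt_R0; lra). simpl. split; [split|]; nra.
Qed.

Let m := W1 (1 - y ^ 2).

Lemma m_pos : 0 < m.
Proof.
  unfold m. rewrite (proj2 y_spec). assert (Ht0 := t0_range).
  apply (W1_pos_above_t0 W W1 W2 HW t0 Hlub). lra.
Qed.

(* Chosen so that A^2 m >= C_N + 16, which radial_ode_riccati excludes for a profile
   staying below y on [A, 2A]. *)
Let A := ((INR N - 1) ^ 2 / 4 + (INR N - 1) / 2 + 16) / m + 1.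

Lemma A_spec : 1 <= A /\ (INR N - 1) ^ 2 / 4 + (INR N - 1) / 2 + 16 <= A ^ 2 * m.
Proof.
  assert (Hm := m_pos). assert (Hk := INR_K_ge_1 N HN). unfold A.
  set (C := (INR N - 1) ^ 2 / 4 + (INR N - 1) / 2 + 16).
  assert (HC : 0 <= C) by (unfold C; nra).
  assert (0 <= C / m) by (apply Rdiv_le_0_compat; lra).
  assert ((C / m + 1) * m = C + m) by (field; lra).
  split; [lra | simpl; nra].
Qed.

Lemma finv_level_lt eps : 0 < eps -> 2 * A * eps < 1 -> finv eps y < 2 * A * eps.
Proof.
  intros He H2. destruct y_spec as [Hy Hy2]. destruct A_spec as [HA HAm].
  assert (Hp := Hprof eps He). assert (Hi := Hinv eps He).
  destruct (profile_inv_spec (f eps) (finv eps) Hi y ltac:(lra)) as [F1 F2].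
  apply Rnot_le_lt; intros Hn.
  enough (A ^ 2 * m < (INR N - 1) ^ 2 / 4 + (INR N - 1) / 2 + 16) by lra.
  apply (radial_ode_riccati N W1 HN W1_mono01 (1 / eps) (fun s => f eps (eps * s))
           (fun s => eps * Derive (f eps) (eps * s))
           (fun s => eps ^ 2 * Derive (Derive (f eps)) (eps * s)));
    [apply profile_rescaled; auto | lra | | lra |].
  - apply (Rmult_lt_reg_l eps); [lra|]. replace (eps * (1 / eps)) with 1 by (field; lra). lra.
  - intros s Hs. split; [apply (profile_pos N W1 eps); auto; nra|].
    rewrite <- F2. apply (profile_le N W1 eps); auto; nra.
Qed.

Lemma profile_above_level : exists C, 0 < C /\
  forall eps r, 0 < eps <= 1 / C -> C * eps <= r <= 1 -> 1 - t0 - delta <= f eps r ^ 2.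
Proof.
  destruct y_spec as [Hy Hy2]. destruct A_spec as [HA _].
  exists (2 * A). split; [lra|].
  intros eps r He Hr. assert (Hp := Hprof eps ltac:(lra)). assert (Hi := Hinv eps ltac:(lra)).
  assert (HCe : 2 * A * eps <= 1).
  { assert (Hle := Rmult_le_compat_l (2 * A) eps (1 / (2 * A)) ltac:(lra) (proj2 He)).
    now replace (2 * A * (1 / (2 * A))) with 1 in Hle by (field; lra). }
  destruct (Req_dec (2 * A * eps) 1) as [E|Hne].
  - replace r with 1 by lra. rewrite (profile_at_1 N W1 eps (f eps) Hp).
    assert (Ht0 := t0_range). lra.
  - assert (finv eps y < 2 * A * eps) by (apply finv_level_lt; lra).
    destruct (profile_inv_spec (f eps) (finv eps) Hi y ltac:(lra)) as [F1 F2].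
    assert (y <= f eps r) by (rewrite <- F2 at 1; apply (profile_le N W1 eps); auto; lra).
    rewrite <- Hy2. nra.
Qed.

Lemma finv_level_div_eps_nonincreasing e1 e2 : 0 < e1 -> e1 <= e2 ->
  finv e2 y / e2 <= finv e1 y / e1.
Proof.
  intros H1 H12. destruct y_spec as [Hy Hy2].
  assert (Hp1 := Hprof e1 H1). assert (Hi1 := Hinv e1 H1).
  assert (Hp2 := Hprof e2 ltac:(lra)). assert (Hi2 := Hinv e2 ltac:(lra)).
  destruct (profile_inv_range N W1 e2 (f e2) (finv e2) Hp2 Hi2 y Hy) as [G1 G2].
  destruct (profile_inv_range N W1 e1 (f e1) (finv e1) Hp1 Hi1 y Hy) as [G3 G4].
  destruct (profile_inv_spec (f e2) (finv e2) Hi2 y ltac:(lra)) as [_ F2].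
  destruct (profile_inv_spec (f e1) (finv e1) Hi1 y ltac:(lra)) as [_ F1].
  set (s := finv e2 y / e2).
  assert (Es : e2 * s = finv e2 y) by (unfold s; field; lra).
  assert (Hs : 0 < s) by (unfold s; apply Rdiv_lt_0_compat; lra).
  assert (Hs' : s < 1 / e2).
  { apply (Rmult_lt_reg_l e2); [lra|]. rewrite Es. replace (e2 * (1 / e2)) with 1 by (field; lra). lra. }
  assert (Hord := profiles_ordered e2 e1 s H1 H12 Hs Hs'). rewrite Es, F2 in Hord.
  apply Rnot_lt_le; intros Hn.
  assert (finv e1 y < e1 * s).
  { apply (Rmult_lt_compat_l e1) in Hn; [|lra].
    now replace (e1 * (finv e1 y / e1)) with (finv e1 y) in Hn by (field; lra). }
  assert (e1 * s <= e2 * s) by (apply Rmult_le_compat_r; lra).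
  assert (f e1 (finv e1 y) < f e1 (e1 * s)) by (apply (profile_incr N W1 e1); auto; lra).
  lra.
Qed.

Lemma finv_level_div_eps_lim : exists L, 0 < L /\
  filterlim (fun eps => finv eps y / eps) (at_right 0) (locally L).
Proof.
  destruct y_spec as [Hy _]. destruct A_spec as [HA _].
  set (e0 := 1 / (4 * A)). assert (He0 : 0 < e0) by (unfold e0; apply Rdiv_lt_0_compat; lra).
  assert (Hb : forall eps, 0 < eps < e0 -> 0 < finv eps y / eps < 2 * A).
  { intros eps He. assert (2 * A * eps < 1).
    { assert (Hlt := Rmult_lt_compat_l (2 * A) eps e0 ltac:(lra) (proj2 He)). unfold e0 in Hlt.
      replace (2 * A * (1 / (4 * A))) with (1 / 2) in Hlt by (field; lra). lra. }
    assert (finv eps y < 2 * A * eps) by (apply finv_level_lt; lra).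
    destruct (profile_inv_range N W1 eps (f eps) (finv eps) (Hprof eps ltac:(lra))
                (Hinv eps ltac:(lra)) y Hy) as [G1 _].
    split; [apply Rdiv_lt_0_compat; lra|].
    apply (Rmult_lt_reg_r eps); [lra|].
    replace (finv eps y / eps * eps) with (finv eps y) by (field; lra). lra. }
  destruct (nonincreasing_bounded_lim_at_right0 (fun eps => finv eps y / eps) e0 (2 * A))
    as [L [HL Hup]]; [exact He0 | | |].
  - intros e1 e2 H1 H12 H2. now apply finv_level_div_eps_nonincreasing.
  - intros e He. apply Rlt_le, Hb, He.
  - exists L. split; [|exact HL].
    assert (0 < finv (e0 / 2) y / (e0 / 2)) by (apply Hb; lra).
    assert (finv (e0 / 2) y / (e0 / 2) <= L) by (apply Hup; lra). lra.
Qed.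

End Level.

End Threshold.

End Proposition.

Theorem propositionB1 (N : nat) (W W1 W2 : R -> R) (f finv : R -> R -> R) :
  (2 <= N)%nat ->
  W_hyp W W1 W2 ->
  (forall eps, 0 < eps -> radial_profile N W1 eps (f eps)) ->
  (forall eps, 0 < eps -> inverse01 (f eps) (finv eps)) ->
  (* (i) *)
  (forall eps eps' r, 0 < eps' -> eps' <= eps -> 0 < r -> r < 1 / eps ->
     f eps' (eps' * r) <= f eps (eps * r)) /\
  (* (ii) *)
  (W1 1 > 0 -> forall t0 : R,
     is_lub (fun t => 0 <= t < 1 /\ W t = 0) t0 ->
     t0 < 1 /\
     filterlim (fun eps => finv eps (sqrt (1 - t0)) / eps)
       (at_right 0) (Rbar_locally p_infty) /\
     (forall delta, 0 < delta < 1 - t0 ->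
        exists L, 0 < L /\
          filterlim (fun eps => finv eps (sqrt (1 - t0 - delta)) / eps)
            (at_right 0) (locally L)) /\
     (forall a, 0 < a -> exists epsa, 0 < epsa /\
        forall eps r, 0 < eps <= epsa -> 0 <= r <= a * eps -> r <= 1 ->
          f eps r ^ 2 <= 1 - t0) /\
     (forall delta, 0 < delta < 1 - t0 -> exists C, 0 < C /\
        forall eps r, 0 < eps <= 1 / C -> C * eps <= r <= 1 ->
          1 - t0 - delta <= f eps r ^ 2)).
Proof.
  intros HN HW Hprof Hinv. split.
  - exact (profiles_ordered N W W1 W2 f finv HN HW Hprof Hinv).
  - intros HW1_1 t0 Hlub. repeat split.
    + exact (proj2 (t0_range W W1 W2 HW HW1_1 t0 Hlub)).
    + exact (finv_threshold_div_eps_lim N W W1 W2 f finv HN HW Hprof Hinv HW1_1 t0 Hlub).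
    + intros delta Hd.
      exact (finv_level_div_eps_lim N W W1 W2 f finv HN HW Hprof Hinv HW1_1 t0 Hlub delta Hd).
    + exact (profile_below_threshold N W W1 W2 f finv HN HW Hprof Hinv HW1_1 t0 Hlub).
    + intros delta Hd.
      exact (profile_above_level N W W1 W2 f finv HN HW Hprof Hinv HW1_1 t0 Hlub delta Hd).
Qed.
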